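(* Let $\mathfrak{L}$ be a class of groups closed under finite index subgroups, let $I:\mathfrak{L}\to\mathbb{R}$ be an invariant and let $G\in\mathfrak{L}$. If $I$ is submultiplicative with respect to finite index normal subgroups, set $\tilde{I}(K)=\inf_{L\leqslant_f K}\frac{I(L)}{|K:L|}$ for $K\in\mathfrak{L}$; then \[\tilde{I}(G)=\frac{\tilde{I}(H)}{|G:H|}\] for every finite index subgroup $H$ of $G$ (so $\tilde I$ is a generalised Euler characteristic). If instead $I$ is supermultiplicative with respect to finite index normal subgroups, set $\tilde{I}(K)=\sup_{L\leqslant_f K}\frac{I(L)}{|K:L|}$; then the same equality $\tilde{I}(G)=\tilde{I}(H)/|G:H|$ holds for every finite index subgroup $H$ of $G$.
   Context: $\mathfrak{L}$ closed under finite index subgroups means that if $G\in\mathfrak{L}$ and $H$ has finite index in $G$ then $H\in\mathfrak{L}$. $I$ is submultiplicative (resp. supermultiplicative) with respect to finite index normal subgroups if $\frac{I(H)}{|G:H|}\le I(G)$ (resp. $\ge I(G)$) for every $G\in\mathfrak{L}$ and every finite index normal subgroup $H$ of $G$. In $\tilde I$ the infimum/supremum ranges over all finite index subgroups $L$ of $K$. *)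

From HB Require Import structures.
From mathcomp Require Import all_boot all_order all_algebra.
From mathcomp Require Import monoid finmap.
From mathcomp Require Import all_classical all_reals ereal.

Set Implicit Arguments.
Unset Strict Implicit.
Unset Printing Implicit Defensive.

Import Order.TTheory GRing.Theory Num.Theory.
Local Open Scope classical_set_scope.
Local Open Scope ring_scope.

Section GroupDefs.
Variable gT : groupType.

Definition ab_subgroup (K : set gT) : Prop :=
  K 1%g /\ (forall x y, K x -> K y -> K (x * y)%g) /\ (forall x, K x -> K (x^-1)%g).

Definition ab_lcoset (x : gT) (L : set gT) : set gT := [set (x * y)%g | y in L].

Definition ab_lcosets (K L : set gT) : set (set gT) := [set ab_lcoset x L | x in K].

(* the ab_index |K : L| (meaningful when the coset space is finite) *)
Definition ab_index (K L : set gT) : nat := #|` fset_set (ab_lcosets K L)|.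

Definition ab_subgroup_of (L K : set gT) : Prop := ab_subgroup L /\ L `<=` K.

Definition ab_fi_subgroup (L K : set gT) : Prop :=
  ab_subgroup_of L K /\ finite_set (ab_lcosets K L).

Definition ab_normal (N K : set gT) : Prop :=
  ab_subgroup_of N K /\ (forall x y, K x -> N y -> N (x^-1 * y * x)%g).

Definition ab_isomorphic (K K' : set gT) : Prop :=
  exists f : gT -> gT,
    [/\ (forall x y, K x -> K y -> f (x * y)%g = (f x * f y)%g),
        (forall x y, K x -> K y -> f x = f y -> x = y) &
        f @` K = K'].

(* a class of groups (here: of subgroups of gT), closed under isomorphism *)
Definition ab_group_class (Lc : set (set gT)) : Prop :=
  (forall K, Lc K -> ab_subgroup K) /\
  (forall K K', Lc K -> ab_subgroup K' -> ab_isomorphic K K' -> Lc K').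

Definition ab_closed_fi (Lc : set (set gT)) : Prop :=
  forall K L, Lc K -> ab_fi_subgroup L K -> Lc L.

Definition ab_invariant {R : realType} (Lc : set (set gT)) (I : set gT -> R) : Prop :=
  forall K K', Lc K -> Lc K' -> ab_isomorphic K K' -> I K = I K'.

Definition ab_submult {R : realType} (Lc : set (set gT)) (I : set gT -> R) : Prop :=
  forall K N, Lc K -> ab_fi_subgroup N K -> ab_normal N K ->
    I N / (ab_index K N)%:R <= I K.

Definition ab_supermult {R : realType} (Lc : set (set gT)) (I : set gT -> R) : Prop :=
  forall K N, Lc K -> ab_fi_subgroup N K -> ab_normal N K ->
    I N / (ab_index K N)%:R >= I K.

Definition Itilde_inf {R : realType} (I : set gT -> R) (K : set gT) : \bar R :=
  ereal_inf [set ((I L / (ab_index K L)%:R)%:E) | L in [set L | ab_fi_subgroup L K]].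

Definition Itilde_sup {R : realType} (I : set gT -> R) (K : set gT) : \bar R :=
  ereal_sup [set ((I L / (ab_index K L)%:R)%:E) | L in [set L | ab_fi_subgroup L K]].

End GroupDefs.

From HB Require Import structures.
From mathcomp Require Import all_boot all_order all_algebra.
From mathcomp Require Import monoid finmap.
From mathcomp Require Import all_classical all_reals ereal.
Import Order.TTheory GRing.Theory Num.Theory.
Local Open Scope classical_set_scope.
Local Open Scope ring_scope.

(* Two facts about finite index subgroups drive the argument: the tower law
   |G : L| = |G : H| |H : L|, and the fact that every finite index subgroup
   L of G contains, for any finite index H of G, a subgroup N normal of finite
   index in L with N <= H (the kernel of the action of L on the cosets of L `&` H).
   The tower law gives Itilde(G) <= Itilde(H) / |G : H| by restricting the
   infimum to subgroups of H; conversely submultiplicativity bounds the term of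
   L from below by the term of N, which appears in the infimum defining
   Itilde(H).  The supremum case is the infimum case applied to -I. *)

Lemma card_fsetM (T1 T2 : choiceType) (A : {fset T1}) (B : {fset T2}) :
  #|` (A `*` B)%fset| = (#|` A| * #|` B|)%N.
Proof.
have -> : (#|` A| * #|` B| = \sum_(i <- A) \sum_(j <- B) 1)%N.
  rewrite (eq_bigr (fun=> #|` B|)); last by move=> i _; rewrite card_fset_sum1.
  by rewrite big_const_seq iter_addn_0 count_predT mulnC.
rewrite card_fset_sum1 pair_big_dep_cond; apply: perm_big.
by apply: uniq_perm => //= [[x y]]; rewrite in_fsetM !inE /= !andbT.
Qed.

Section Cosets.
Context {gT : groupType}.
Implicit Types (A B G H K L M N : set gT) (a b x y z : gT).

Lemma ab_subgroup1 {A} : ab_subgroup A -> A 1%g.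
Proof. by case. Qed.

Lemma ab_subgroupM {A a b} : ab_subgroup A -> A a -> A b -> A (a * b)%g.
Proof. by move=> [_ [+ _]]; apply. Qed.

Lemma ab_subgroupV {A a} : ab_subgroup A -> A a -> A (a^-1)%g.
Proof. by move=> [_ [_ +]]; apply. Qed.

Lemma ab_subgroupI {A B} : ab_subgroup A -> ab_subgroup B -> ab_subgroup (A `&` B).
Proof.
move=> sA sB; split; first by split; exact: ab_subgroup1.
split; first by move=> a b [? ?] [? ?]; split; exact: ab_subgroupM.
by move=> a [? ?]; split; exact: ab_subgroupV.
Qed.

Lemma lcosetM a b A : ab_lcoset a (ab_lcoset b A) = ab_lcoset (a * b)%g A.
Proof.
apply/seteqP; split => z /=.
  by move=> [_ [y Ay <-] <-]; exists y => //; rewrite mulgA.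
by move=> [y Ay <-]; exists (b * y)%g; [exists y | rewrite mulgA].
Qed.

Lemma lcoset1 A : ab_lcoset 1%g A = A.
Proof.
apply/seteqP; split => z /=; first by move=> [y Ay <-]; rewrite mul1g.
by move=> Az; exists z => //; rewrite mul1g.
Qed.

Lemma lcosetK a A : ab_lcoset (a^-1)%g (ab_lcoset a A) = A.
Proof. by rewrite lcosetM mulVg lcoset1. Qed.

Lemma in_lcoset x A z : ab_lcoset x A z <-> A (x^-1 * z)%g.
Proof.
split; first by move=> [y Ay <-]; rewrite mulKg.
by move=> Ay; exists (x^-1 * z)%g => //; rewrite mulVKg.
Qed.

Lemma lcoset_refl x {A} : ab_subgroup A -> ab_lcoset x A x.
Proof. by move=> sA; apply/in_lcoset; rewrite mulVg; exact: ab_subgroup1. Qed.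

Lemma eq_lcoset A x y : ab_subgroup A ->
  ab_lcoset x A = ab_lcoset y A <-> A (x^-1 * y)%g.
Proof.
move=> sA; split; first by move=> E; apply/in_lcoset; rewrite E; exact: lcoset_refl.
move=> Axy; apply/seteqP; split => z /in_lcoset Az; apply/in_lcoset.
  have -> : (y^-1 * z = (x^-1 * y)^-1 * (x^-1 * z))%g.
    by rewrite invgM invgK -mulgA mulVKg.
  by apply: ab_subgroupM => //; exact: ab_subgroupV.
by rewrite -(mulVKg y z) mulgA; exact: ab_subgroupM.
Qed.

Lemma finite_lcosets_key {U : Type} (key : gT -> U) L N :
  ab_subgroup L -> ab_subgroup N -> N `<=` L ->
  (forall y z, L y -> L z -> key y = key z <-> N (y^-1 * z)%g) ->
  finite_set (key @` L) -> finite_set (ab_lcosets L N).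
Proof.
move=> sL sN NL keyP fkey.
apply: (sub_finite_set _ (finite_image (fun u => [set z | L z /\ key z = u]) fkey)).
move=> _ [y Ly <-]; exists (key y); first by exists y.
apply/seteqP; split => z /=.
  by move=> [Lz kz]; apply/in_lcoset/(keyP y z Ly Lz).
move=> /in_lcoset Nz; have Lz : L z.
  by rewrite -(mulVKg y z); apply: ab_subgroupM => //; exact: NL.
by split => //; symmetry; apply/(keyP y z Ly Lz).
Qed.

Lemma finite_lcosets_sub {G H N} : ab_subgroup H -> ab_subgroup N ->
  H `<=` G -> N `<=` H -> finite_set (ab_lcosets G N) ->
  finite_set (ab_lcosets H N).
Proof.
move=> sH sN HG NH fGN.
apply: (finite_lcosets_key (fun z => ab_lcoset z N)) => //.
  by move=> y z _ _; exact: eq_lcoset.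
by apply: (sub_finite_set _ fGN) => _ [y Hy <-]; exists y => //; exact: HG.
Qed.

Lemma finite_lcosets_setI {G H L} : ab_subgroup H -> ab_subgroup L ->
  L `<=` G -> finite_set (ab_lcosets G H) ->
  finite_set (ab_lcosets L (L `&` H)).
Proof.
move=> sH sL LG fGH.
apply: (finite_lcosets_key (fun z => ab_lcoset z H)) => //.
- exact: ab_subgroupI.
- move=> y z Ly Lz; rewrite eq_lcoset //; split; last by case.
  by split => //; apply: ab_subgroupM => //; exact: ab_subgroupV.
- by apply: (sub_finite_set _ fGH) => _ [y Ly <-]; exists y => //; exact: LG.
Qed.

Lemma ab_index_gt0 K L : ab_subgroup K -> finite_set (ab_lcosets K L) ->
  (0 < ab_index K L)%N.
Proof.
move=> sK fKL; rewrite /ab_index cardfs_gt0; apply/fset0Pn.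
exists (ab_lcoset 1%g L); rewrite in_fset_set // inE.
by exists 1%g => //; exact: ab_subgroup1.
Qed.

Definition lcoset_repr (C : set gT) : gT := xget 1%g C.

(* A pair (xH, yL) with yL a coset in H is sent to the coset r y L of G,
   where r is the chosen representative of xH. *)
Definition lcoset_lift (p : set gT * set gT) : set gT :=
  ab_lcoset (lcoset_repr p.1) p.2.

Lemma lcoset_reprP {H} x :
  ab_subgroup H -> H (x^-1 * lcoset_repr (ab_lcoset x H))%g.
Proof. by move=> sH; apply/in_lcoset/(xgetI 1%g (x := x))/lcoset_refl. Qed.

Section Tower.
Variables G H L : set gT.
Hypotheses (sG : ab_subgroup G) (sH : ab_subgroup H) (sL : ab_subgroup L).
Hypotheses (HG : H `<=` G) (LH : L `<=` H).

Lemma lcosets_tower :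
  ab_lcosets G L = lcoset_lift @` (ab_lcosets G H `*` ab_lcosets H L).
Proof.
apply/seteqP; split.
  move=> _ [x Gx <-]; pose r := lcoset_repr (ab_lcoset x H).
  have Hrx : H (r^-1 * x)%g.
    by move: (ab_subgroupV sH (lcoset_reprP x sH)); rewrite invgM invgK.
  exists (ab_lcoset x H, ab_lcoset (r^-1 * x)%g L).
    by split; [exists x | exists (r^-1 * x)%g].
  by rewrite /lcoset_lift /= lcosetM mulVKg.
move=> _ [[C D] /= [[x Gx <-] [y Hy <-]] <-].
exists (lcoset_repr (ab_lcoset x H) * y)%g; last by rewrite /lcoset_lift /= lcosetM.
apply: ab_subgroupM => //; last exact: HG.
rewrite -(mulVKg x (lcoset_repr _)); apply: ab_subgroupM => //.
exact/HG/lcoset_reprP.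
Qed.

Lemma lcoset_lift_inj p q :
  (ab_lcosets G H `*` ab_lcosets H L) p -> (ab_lcosets G H `*` ab_lcosets H L) q ->
  lcoset_lift p = lcoset_lift q -> p = q.
Proof.
move: p q => [C D] [C' D'] /= [[x Gx <-] [y Hy <-]] [[x' Gx' <-] [y' Hy' <-]].
rewrite /lcoset_lift /= !lcosetM => /(eq_lcoset _ _ _ sL) Lr.
pose r := lcoset_repr (ab_lcoset x H); pose r' := lcoset_repr (ab_lcoset x' H).
have eqxH : ab_lcoset x H = ab_lcoset x' H.
  rewrite (proj2 (eq_lcoset _ x _ sH) (lcoset_reprP x sH)).
  rewrite (proj2 (eq_lcoset _ x' _ sH) (lcoset_reprP x' sH)) -/r -/r'.
  have -> : ab_lcoset r H = ab_lcoset (r * y)%g H by apply/eq_lcoset; rewrite ?mulKg.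
  have -> : ab_lcoset r' H = ab_lcoset (r' * y')%g H by apply/eq_lcoset; rewrite ?mulKg.
  by apply/eq_lcoset => //; exact: LH.
rewrite -eqxH in Lr *; congr pair; apply/eq_lcoset => //.
by move: Lr; rewrite -/r invgM -mulgA mulKg.
Qed.

Lemma ab_index_mul : finite_set (ab_lcosets G H) -> finite_set (ab_lcosets H L) ->
  finite_set (ab_lcosets G L) /\ ab_index G L = (ab_index G H * ab_index H L)%N.
Proof.
move=> fGH fHL.
have fX : finite_set (ab_lcosets G H `*` ab_lcosets H L) by exact: finite_setX.
rewrite lcosets_tower; split; first exact: finite_image.
rewrite /ab_index lcosets_tower fset_set_image // card_in_imfset /=.
  by rewrite fset_setX // card_fsetM.
by move=> p q; rewrite !in_fset_set // !inE; exact: lcoset_lift_inj.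
Qed.

End Tower.

Definition lcoset_kernel L M : set gT :=
  [set n | L n /\ forall x, L x -> ab_lcoset n (ab_lcoset x M) = ab_lcoset x M].

Section Kernel.
Variables L M : set gT.
Hypotheses (sL : ab_subgroup L) (sM : ab_subgroup M).

Lemma lcoset_kernel_subgroup : ab_subgroup (lcoset_kernel L M).
Proof.
split; first by split; [exact: ab_subgroup1 | move=> x _; rewrite lcoset1].
split.
  move=> a b [La ha] [Lb hb]; split; first exact: ab_subgroupM.
  by move=> x Lx; rewrite -lcosetM hb // ha.
move=> a [La ha]; split; first exact: ab_subgroupV.
by move=> x Lx; rewrite -{1}(ha x Lx) lcosetK.
Qed.

Lemma lcoset_kernel_sub : lcoset_kernel L M `<=` L `&` M.
Proof.
move=> n [Ln hn]; split => //.
have := hn 1%g (ab_subgroup1 sL); rewrite !lcoset1 => <-.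
exact: lcoset_refl.
Qed.

Lemma lcoset_kernel_normal : ab_normal (lcoset_kernel L M) L.
Proof.
split; first by split; [exact: lcoset_kernel_subgroup | move=> n [] ].
move=> x n Lx [Ln hn]; split.
  by apply: ab_subgroupM => //; apply: ab_subgroupM => //; exact: ab_subgroupV.
move=> y Ly; rewrite -!lcosetM (lcosetM x y) hn; last exact: ab_subgroupM.
by rewrite -lcosetM lcosetK.
Qed.

(* A coset of the kernel is determined by the permutation it induces on L/M,
   i.e. by the graph of that permutation, a subset of the finite set
   L/M x L/M. *)
Lemma finite_lcosets_kernel : finite_set (ab_lcosets L M) ->
  finite_set (ab_lcosets L (lcoset_kernel L M)).
Proof.
move=> fLM; pose graph z := [set (C, ab_lcoset z C) | C in ab_lcosets L M].
have kerL : lcoset_kernel L M `<=` L by move=> n [].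
apply: (finite_lcosets_key graph) => //; first exact: lcoset_kernel_subgroup.
  move=> y z Ly Lz; split.
    move=> e; split; first by apply: ab_subgroupM => //; exact: ab_subgroupV.
    move=> x Lx.
    have : graph z (ab_lcoset x M, ab_lcoset z (ab_lcoset x M)).
      by exists (ab_lcoset x M) => //; exists x.
    by rewrite -e => -[C' _ [-> e2]]; rewrite -lcosetM -e2 lcosetK.
  move=> [_ hn].
  have eyz C : ab_lcosets L M C -> ab_lcoset z C = ab_lcoset y C.
    by move: C => _ [x Lx <-]; rewrite -(mulVKg y z) -lcosetM hn.
  by apply/seteqP; split => _ [C LC <-]; exists C => //; rewrite eyz.
pose X := ab_lcosets L M `*` ab_lcosets L M.
have fX : finite_set X by exact: finite_setX.
apply: (sub_finite_set _ (finite_image (fun F : {fset _} => [set` F])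
  (finite_fset (fpowerset (fset_set X))))).
move=> _ [y Ly <-].
exists (fset_set (graph y)); last by rewrite fset_setK //; exact: finite_image.
rewrite /= fpowersetE -fset_set_sub //; last exact: finite_image.
move=> _ [C [x Lx <-] <-]; split; first by exists x.
by exists (y * x)%g; [exact: ab_subgroupM | rewrite lcosetM].
Qed.

End Kernel.
Arguments lcoset_kernel_sub {L M}.

Lemma normal_fi_subgroup_sub {G H L} : ab_subgroup H -> ab_subgroup L ->
  L `<=` G -> finite_set (ab_lcosets G H) ->
  exists N, [/\ ab_fi_subgroup N L, ab_normal N L & N `<=` H].
Proof.
move=> sH sL LG fGH; have sLH := ab_subgroupI sL sH.
have fLLH := finite_lcosets_setI sH sL LG fGH.
exists (lcoset_kernel L (L `&` H)); split.
- split; last exact: finite_lcosets_kernel.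
  by split; [exact: lcoset_kernel_subgroup | move=> n [] ].
- exact: lcoset_kernel_normal.
- by move=> n /(lcoset_kernel_sub sL sLH) [_ []].
Qed.

End Cosets.
Arguments ab_index_mul {gT G H L}.

Section Itilde.
Context {R : realType} {gT : groupType}.
Implicit Types (Lc : set (set gT)) (I : set gT -> R) (G H K : set gT).

Lemma Itilde_inf_index {Lc I G H} :
  ab_closed_fi Lc -> ab_subgroup G -> Lc G -> ab_submult Lc I ->
  ab_fi_subgroup H G ->
  Itilde_inf I G = (Itilde_inf I H * ((ab_index G H)%:R^-1)%:E)%E.
Proof.
move=> clo sG LcG sub [[sH HG] fGH].
have iGH_gt0 : 0 < (ab_index G H)%:R :> R by rewrite ltr0n ab_index_gt0.
apply/le_anti/andP; split.
  rewrite lee_pdivlMr //; apply: le_ereal_inf_tmp => _ [L [[sL LH] fHL] <-].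
  have [fGL eGL] := ab_index_mul sG sH sL HG LH fGH fHL.
  rewrite -lee_pdivlMr // -EFinM; apply: ereal_inf_lbound.
  exists L; first by split => //; split => // x /LH /HG.
  by rewrite eGL natrM invfM mulrA mulrAC.
apply: le_ereal_inf_tmp => _ [L [[sL LG] fGL] <-].
have [N [[[sN NL] fLN] nNL NH]] := normal_fi_subgroup_sub sH sL LG fGH.
have [fGN eGN] := ab_index_mul sG sL sN LG NL fGL fLN.
have fHN := finite_lcosets_sub sH sN HG NH fGN.
have [_ eGN'] := ab_index_mul sG sH sN HG NH fGH fHN.
have LcL : Lc L by apply: (clo G L LcG); split => //; split.
have subLN := sub L N LcL (conj (conj sN NL) fLN) nNL.
apply: (@le_trans _ _ ((I N / (ab_index H N)%:R)%:E * ((ab_index G H)%:R^-1)%:E)%E).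
  apply: lee_wpmul2r; first by rewrite lee_fin invr_ge0 ltW.
  by apply: ereal_inf_lbound; exists N => //; split => //; split.
rewrite -EFinM lee_fin -mulrA -invfM -natrM mulnC -eGN' eGN natrM invfM mulrA.
by rewrite mulrAC; apply: ler_wpM2r => //; rewrite invr_ge0 ler0n.
Qed.

Lemma Itilde_supEN I K :
  Itilde_sup I K = (- Itilde_inf (fun L => (- I L)%R) K)%E.
Proof.
rewrite /Itilde_sup /Itilde_inf ereal_supEN; congr (- ereal_inf _)%E.
by rewrite image_comp; apply: eq_imagel => L _ /=; rewrite mulNr EFinN.
Qed.

Lemma Itilde_sup_index {Lc I G H} :
  ab_closed_fi Lc -> ab_subgroup G -> Lc G -> ab_supermult Lc I ->
  ab_fi_subgroup H G ->
  Itilde_sup I G = (Itilde_sup I H * ((ab_index G H)%:R^-1)%:E)%E.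
Proof.
move=> clo sG LcG sup fH.
rewrite !Itilde_supEN (Itilde_inf_index clo sG LcG _ fH) ?mulNe //.
by move=> K N LcK fN nN; rewrite mulNr lerN2; exact: sup.
Qed.

End Itilde.

Theorem mainTheorem2 (R : realType) (gT : groupType)
    (Lc : set (set gT)) (I : set gT -> R) (G : set gT) :
  ab_group_class Lc -> ab_closed_fi Lc -> ab_invariant Lc I -> Lc G ->
  (ab_submult Lc I ->
     forall H, ab_fi_subgroup H G ->
       Itilde_inf I G = (Itilde_inf I H * ((ab_index G H)%:R^-1)%:E)%E) /\
  (ab_supermult Lc I ->
     forall H, ab_fi_subgroup H G ->
       Itilde_sup I G = (Itilde_sup I H * ((ab_index G H)%:R^-1)%:E)%E).
Proof.
move=> [subLc _] clo _ LcG; have sG := subLc G LcG.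
split => [sub H fH | sup H fH].
- exact: Itilde_inf_index clo sG LcG sub fH.
- exact: Itilde_sup_index clo sG LcG sup fH.
Qed.
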